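(* $\mathsf{Permutation}\in\mathsf{dAM}[O(\log n)]$, where in $\mathsf{Permutation}$ each node $u$ of the $n$-node communication graph holds a value $a_u\in\{1,\dots,n\}$ and the instance is in the language iff the values $(a_u)_{u\in V}$ are pairwise distinct (i.e. form a permutation of $\{1,\dots,n\}$).
   Context: Distributed interactive proofs (model). An instance consists of a connected communication graph $G=(V,E)$ with $|V|=n$, where each node has a unique identifier of $O(\log n)$ bits, knows $n$, knows its own identifier, its local input (if the problem has local inputs), and the identifiers of its neighbours (with an arbitrary port numbering of its incident edges). A prover, who sees the whole instance, interacts with all nodes in $r$ alternating messages. In a verifier (node) message each node independently samples fresh uniformly random bits and sends them to the prover (public coins). In a prover message the prover sends each node a string. Nodes may additionally exchange the strings they received from the prover with their neighbours in $G$. At the end each node deterministically accepts or rejects as a function of its local information, its own random bits, the strings it received from the prover and those its neighbours received; the instance is accepted iff all nodes accept. The proof size is the maximum number of bits in any single message between the prover and any node. A language $\mathcal L$ (set of instances) is in $\mathsf{dIP}[r,\ell]$ if there is an $r$-message protocol of proof size $\ell=\ell(n)$ such that (completeness) for every instance in $\mathcal L$ some prover makes all nodes accept with probability $>2/3$, and (soundness) for every instance not in $\mathcal L$ and every prover, all nodes accept with probability $<1/3$ (probabilities over the nodes' coins). $\mathsf{dAM}[\ell]$, $\mathsf{dMAM}[\ell]$, $\mathsf{dAMAM}[\ell]$, $\mathsf{dMAMAM}[\ell]$ denote the cases of 2, 3, 4, 5 messages, where the letters indicate who sends each message in order (A = nodes send random coins, M = prover). *)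

(* Model of distributed interactive proofs, dAM (2 messages: A then M). *)
From mathcomp Require Import all_boot.
Set Implicit Arguments. Unset Strict Implicit. Unset Printing Implicit Defensive.

Definition valid_graph (n : nat) (e : rel 'I_n) : Prop :=
  symmetric e /\ irreflexive e /\ (forall u v : 'I_n, connect e u v).

(* Port numbering: ports u lists the neighbours of u, each exactly once,
   in an arbitrary order (port i of u leads to the i-th element). *)
Definition valid_ports (n : nat) (e : rel 'I_n) (ports : 'I_n -> seq 'I_n) : Prop :=
  forall u, uniq (ports u) /\ (forall v, (v \in ports u) = e u v).

(* Unique identifiers of O(log n) bits: injective, with values below n ^ c. *)
Definition valid_ids (n c : nat) (id : 'I_n -> nat) : Prop :=
  injective id /\ (forall u, id u < n ^ c).

(* Arguments, in order:
   n, own identifier, own local input, identifiers of the neighbours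
   (in port order), own random bits, own prover string, prover strings
   received by the neighbours (in port order). *)
Definition decision := nat -> nat -> nat -> seq nat -> bitseq -> bitseq -> seq bitseq -> bool.

(* Public coins of all nodes: each node samples r uniformly random bits. *)
Definition coins (n r : nat) := {ffun 'I_n -> r.-tuple bool}.

Definition all_accept (n r : nat) (dec : decision) (ports : 'I_n -> seq 'I_n)
    (id : 'I_n -> nat) (a : 'I_n -> nat) (x : coins n r) (pf : 'I_n -> bitseq) : bool :=
  [forall u : 'I_n,
     dec n (id u) (a u) (map id (ports u)) (val (x u)) (pf u) (map pf (ports u))].

(* Number of coin outcomes on which the prover strategy P makes all nodes accept.
   P sees the whole instance (it is chosen per instance) and all the coins. *)
Definition acc_count (n r : nat) (dec : decision) (ports : 'I_n -> seq 'I_n)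
    (id : 'I_n -> nat) (a : 'I_n -> nat) (P : coins n r -> 'I_n -> bitseq) : nat :=
  #|[pred x : coins n r | all_accept dec ports id a x (P x)]|.

Definition bounded_prover (n r l : nat) (P : coins n r -> 'I_n -> bitseq) : Prop :=
  forall x u, size (P x u) <= l.

(* A language: a predicate on instances (n, graph, ports, identifiers, inputs). *)
Definition language :=
  forall n : nat, rel 'I_n -> ('I_n -> seq 'I_n) -> ('I_n -> nat) -> ('I_n -> nat) -> Prop.

(* For every polynomial identifier range n^c there is a protocol (coin length r n,
   decision rule dec) and a constant C with proof size l(n) = C * (log2 n + 1)
   bounding every message (random bits sent to the prover and prover strings);
   acceptance probabilities are counted over the uniform coin space. *)
Definition in_dAM_log (L : language)
    (inputs_ok : forall n : nat, ('I_n -> nat) -> Prop) : Prop :=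
  forall c : nat, exists (C : nat) (r : nat -> nat) (dec : decision),
    (forall n, r n <= C * (trunc_log 2 n).+1) /\
    forall (n : nat) (e : rel 'I_n) (ports : 'I_n -> seq 'I_n)
           (id : 'I_n -> nat) (a : 'I_n -> nat),
      0 < n -> valid_graph e -> valid_ports e ports -> valid_ids c id ->
      inputs_ok n a ->
      (L n e ports id a ->
         exists P : coins n (r n) -> 'I_n -> bitseq,
           @bounded_prover n (r n) (C * (trunc_log 2 n).+1) P /\
           2 * #|coins n (r n)| < 3 * @acc_count n (r n) dec ports id a P) /\
      (~ L n e ports id a ->
         forall P : coins n (r n) -> 'I_n -> bitseq,
           @bounded_prover n (r n) (C * (trunc_log 2 n).+1) P ->
           3 * @acc_count n (r n) dec ports id a P < #|coins n (r n)|).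

Definition permutation_lang : language :=
  fun n _ _ _ a => injective a.

Definition permutation_inputs (n : nat) (a : 'I_n -> nat) : Prop :=
  forall u, 1 <= a u <= n.

(* The prover roots a BFS spanning tree at some node r and broadcasts the coin
   of r, read as an element z of the field GF(2^k), where 2^k > 3 n^2.  Every
   node u certifies its depth, its parent and V(u) = prod_{v below u} (z - a_v),
   which its neighbours let it check against the values of its children; the
   root checks V(r) = prod_{j=1..n} (z - j).  For a permutation the two
   products are the same polynomial in z, so the honest prover fails only if
   z is in {1..n}.  Otherwise they are distinct monic polynomials of degree n,
   which agree on at most n points, and acceptance forces the coin of the
   unique node of depth 0 to be one of them: a union bound over that node
   bounds the acceptance probability by n * n / 2^k < 1/3. *)

From mathcomp Require Import all_boot ssralg poly finalg finfield zify.
Set Implicit Arguments. Unset Strict Implicit. Unset Printing Implicit Defensive.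
Import GRing.Theory.

Lemma prod_tree (I : finType) (F : fieldType) (r : I) (parent : I -> I) (f V : I -> F) :
    (forall u, V u != 0%R) ->
    (forall u, V u = f u * \prod_(v | (v != r) && (parent v == u)) V v)%R ->
  V r = (\prod_u f u)%R.
Proof.
move=> V_neq0 V_rec.
have prod_nonroot_neq0 : (\prod_(v | v != r) V v != 0)%R by apply/prodf_neq0.
apply: (mulIf prod_nonroot_neq0); rewrite -(bigD1 r (_ : true)) //=.
rewrite (eq_bigr _ (fun u _ => V_rec u)) big_split /=; congr (_ * _)%R.
by rewrite [RHS](partition_big parent predT).
Qed.

Fixpoint tree_prod (T : Type) (R : nzRingType) (f : T -> R) (children : T -> seq T)
    (h : nat) (u : T) : R :=
  if h is h'.+1 then (f u * \prod_(v <- children u) tree_prod f children h' v)%R else 1%R.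

Lemma tree_prod_neq0 (T : Type) (R : fieldType) (f : T -> R) children h u :
  (forall u, f u != 0%R) -> tree_prod f children h u != 0%R.
Proof.
move=> f_neq0; elim: h u => [|h IH] u /=; first exact: oner_neq0.
rewrite mulf_neq0 //; apply: (big_ind (fun y => y != 0%R)) => //.
  exact: oner_neq0.
exact: mulf_neq0.
Qed.

Lemma card_ffun_coord (I T : finType) (w : I) (S : {pred T}) :
  #|[pred x : {ffun I -> T} | x w \in S]| = #|S| * #|T| ^ #|I|.-1.
Proof.
pose F u := if u == w then mem S else mem (@predT T).
have -> : #|[pred x : {ffun I -> T} | x w \in S]| = #|family F|.
  apply: eq_card => x; apply/idP/familyP => [Sxw u|/(_ w)]; rewrite /F.
    by case: eqP => [->|].
  by rewrite eqxx.
rewrite card_family.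
have -> : foldr muln 1 [seq #|F x| | x : I] = \prod_u #|F u|.
  by rewrite foldrE big_image.
rewrite (bigD1 w) //= {1}/F eqxx.
rewrite (eq_bigr (fun _ => #|T|)) ?prod_nat_const ?cardC1 // => u /negbTE.
by rewrite /F => ->; apply: eq_card.
Qed.

Lemma card_preim_bij (T T' : finType) (f : T -> T') (B : {pred T'}) :
  injective f -> #|T| = #|T'| -> #|[pred t | f t \in B]| = #|B|.
Proof.
move=> f_inj cardTT'; rewrite (card_preim f_inj); apply: eq_card => y.
by rewrite !inE (inj_card_onto f_inj (eq_leq (esym cardTT'))).
Qed.

Lemma card_exists_le (I T : finType) (P : I -> pred T) :
  #|[pred x | [exists i, P i x]]| <= \sum_i #|P i|.
Proof.
rewrite -sum1_card (@leq_trans (\sum_x \sum_i P i x)) //.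
  rewrite big_mkcond /= leq_sum // => x _; case: ifP => // /existsP [i Pix].
  by rewrite (bigD1 i) //= Pix.
rewrite exchange_big /= leq_sum // => i _.
by rewrite -sum1_card [leqRHS]big_mkcond /= leq_sum // => x _; rewrite unfold_in; case: (P i x).
Qed.

Lemma connect_invariant (T : finType) (X : Type) (e : rel T) (f : T -> X) u v :
  (forall u v, e u v -> f v = f u) -> connect e u v -> f v = f u.
Proof.
move=> f_inv /connectP [p e_p ->]; elim: p u e_p => [|w p IH] u //= /andP [e_uw e_p].
by rewrite (IH w e_p) (f_inv _ _ e_uw).
Qed.

Lemma exists_depth (T : finType) (e : rel T) (r : T) :
    (forall u, connect e u r) ->
  exists d : T -> nat, [/\ forall u, d u < #|T|, forall u, d u = 0 <-> u = r &
    forall u, 0 < d u -> exists2 p, e u p & d p = (d u).-1].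
Proof.
move=> conn.
pose path_of_len u k := [exists t : k.-tuple T, path e u t && (last u t == r)].
have ex u : exists k, path_of_len u k.
  have /connectP [p e_p last_p] := conn u.
  by exists (size p); apply/existsP; exists (in_tuple p); rewrite e_p -last_p eqxx.
pose d u := ex_minn (ex u).
have dP u : path_of_len u (d u) by rewrite /d; case: ex_minnP.
have d_min u k : path_of_len u k -> d u <= k by rewrite /d; case: ex_minnP => ? _; apply.
have path_len u p : path e u p -> last u p = r -> d u <= size p.
  by move=> e_p last_p; apply: d_min; apply/existsP; exists (in_tuple p); rewrite e_p last_p /=.
exists d; split.
- move=> u; have /connectP [p /shortenP [p' e_p' uniq_p' _] last_p] := conn u.
  apply: (leq_ltn_trans (path_len _ _ e_p' (esym last_p))).
  by rewrite -ltnS -[(size p').+1]/(size (u :: p')) -(card_uniqP uniq_p') ltnS max_card.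
- move=> u; split => [d0|->]; last by apply/eqP; rewrite -leqn0 (path_len _ [::]).
  by have := dP u; rewrite d0 => /existsP [t]; rewrite tuple0 /= => /eqP.
- move=> u d_gt0; have /existsP [[t size_t] /andP [e_t /eqP last_t]] := dP u.
  case: t size_t e_t last_t => [|p t] /= /eqP size_t; first by rewrite -size_t in d_gt0.
  case/andP=> e_up e_t last_t; exists p => //; apply/eqP.
  rewrite eqn_leq -{1}size_t path_len //=.
  have /existsP [t' /andP [e_t' /eqP last_t']] := dP p.
  by rewrite -ltnS prednK // -[(d p).+1](size_tuple [tuple of p :: t']) path_len //= e_up.
Qed.

Lemma big_uniq_cond (T : finType) (R : Type) (idx : R) (op : Monoid.com_law idx)
    (r : seq T) (P Q : pred T) (F : T -> R) :
    uniq r -> (forall v, (v \in r) && P v = Q v) ->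
  \big[op/idx]_(v <- r | P v) F v = \big[op/idx]_(v | Q v) F v.
Proof.
move=> uniq_r PQ; rewrite big_mkcond [RHS]big_mkcond (big_uniq _ uniq_r) /=.
rewrite [RHS](bigID (mem r)) /= [X in op _ X]big1 ?Monoid.mulm1.
  by apply: eq_bigr => v r_v; rewrite -PQ r_v.
by move=> v /negbTE r_v; rewrite -PQ r_v.
Qed.

Section RootCount.
Local Open Scope ring_scope.

Lemma horner_prod_XsubC (R : comNzRingType) (s : seq R) y :
  (\prod_(x <- s) ('X - x%:P)).[y] = \prod_(x <- s) (y - x).
Proof. by rewrite horner_prod; apply: eq_bigr => x _; rewrite hornerXsubC. Qed.

Lemma card_prod_subr_eq (F : finFieldType) (s t : seq F) (k : F) :
    size s = size t -> k \in t -> k \notin s ->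
  (#|[set y : F | (\prod_(x <- s) (y - x) == \prod_(x <- t) (y - x))%R]| <= size s)%N.
Proof.
move=> size_st t_k s_k.
pose ps := \prod_(x <- s) ('X - x%:P); pose pt := \prod_(x <- t) ('X - x%:P).
have D_neq0 : ps - pt != 0.
  apply: contraNneq s_k => /(congr1 (horner^~ k)); rewrite horner0 hornerD hornerN.
  have /rootP -> : root pt k by rewrite root_prod_XsubC.
  by rewrite subr0 => /rootP; rewrite root_prod_XsubC.
have size_D : size (ps - pt) <= (size s).+1.
  by rewrite (leq_trans (size_polyD _ _)) // size_polyN !size_prod_XsubC size_st maxnn.
rewrite -ltnS cardE (leq_trans _ size_D) // max_poly_roots ?enum_uniq //.
apply/allP => y; rewrite mem_enum inE => /eqP eq_y.
by rewrite /root hornerD hornerN !horner_prod_XsubC eq_y subrr.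
Qed.

End RootCount.

Section ValuesInRange.
Variables (n : nat) (a : 'I_n -> nat).
Hypothesis a_range : forall u, 1 <= a u <= n.

Lemma codom_sub_iota : {subset codom a <= iota 1 n}.
Proof.
move=> _ /codomP [u ->]; rewrite mem_iota; have := a_range u; lia.
Qed.

Lemma perm_codom_iota : injective a -> perm_eq (codom a) (iota 1 n).
Proof.
move=> a_inj; have uniq_a : uniq (codom a) by rewrite codomE map_inj_uniq ?enum_uniq.
have [|_ eq_a] := uniq_min_size uniq_a codom_sub_iota.
  by rewrite size_iota size_codom card_ord.
exact: uniq_perm (iota_uniq _ _) eq_a.
Qed.

End ValuesInRange.

Lemma missing_value n (a : 'I_n -> nat) :
  ~ injective a -> exists2 k, k \in iota 1 n & k \notin codom a.
Proof.
move=> a_ninj; apply/hasP; apply: contraT; rewrite -all_predC => /allP /= onto.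
have sub_iota : {subset iota 1 n <= codom a} by move=> k /onto /negPn.
have [|_ eq_a] := uniq_min_size (iota_uniq 1 n) sub_iota.
  by rewrite size_iota size_codom card_ord.
case: a_ninj; apply/injectiveP; rewrite /injectiveb /dinjectiveb -codomE.
by rewrite (uniq_size_uniq (iota_uniq 1 n) eq_a) size_codom card_ord size_iota.
Qed.

Lemma prod_codom_iota (R : comNzRingType) n (a : 'I_n -> nat) (f : nat -> R) :
    (forall u, 1 <= a u <= n) -> injective a ->
  (\prod_u f (a u) = \prod_(j <- iota 1 n) f j)%R.
Proof.
by move=> a_range a_inj; rewrite -(perm_big _ (perm_codom_iota a_range a_inj)) big_image.
Qed.

Fixpoint bits_of (w m : nat) : bitseq :=
  if w is w'.+1 then odd m :: bits_of w' m./2 else [::].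

Fixpoint nat_of_bits (s : bitseq) : nat :=
  if s is b :: s' then b + (nat_of_bits s').*2 else 0.

Lemma size_bits_of w m : size (bits_of w m) = w.
Proof. by elim: w m => [|w IH] m //=; rewrite IH. Qed.

Lemma bits_ofK w m : m < 2 ^ w -> nat_of_bits (bits_of w m) = m.
Proof.
elim: w m => [|w IH] m /=; first by rewrite expn0 ltnS leqn0 => /eqP ->.
move=> m_lt; rewrite IH ?odd_double_half //.
rewrite -ltn_double -(ltn_add2l (odd m)) odd_double_half -muln2 -expnSr.
by apply: (leq_trans m_lt); rewrite leq_addl.
Qed.

Definition pack (w : nat) (ms : seq nat) : bitseq := flatten (map (bits_of w) ms).
Definition unpack (w i : nat) (s : bitseq) : nat := nat_of_bits (take w (drop (i * w) s)).

Lemma size_pack w ms : size (pack w ms) = size ms * w.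
Proof.
by elim: ms => [|m ms IH] //; rewrite /pack /= size_cat size_bits_of -/(pack w ms) IH mulSn.
Qed.

Lemma unpack_pack w ms i :
  i < size ms -> nth 0 ms i < 2 ^ w -> unpack w i (pack w ms) = nth 0 ms i.
Proof.
rewrite /unpack; elim: ms i => [|m ms IH] [|i] //= i_lt m_lt.
  by rewrite /pack /= drop0 take_size_cat ?size_bits_of // bits_ofK.
rewrite /pack /= mulSn drop_cat size_bits_of ltnNge leq_addr /= addKn.
exact: IH.
Qed.

Definition coin_len (n : nat) := (trunc_log 2 n).*2.+4.

Lemma coin_len_gt0 n : 0 < coin_len n. Proof. by []. Qed.

Definition gf (n : nat) : finFieldType :=
  s2val (pPrimePowerField (isT : prime 2) (coin_len_gt0 n)).

Lemma card_gf n : #|gf n| = 2 ^ coin_len n.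
Proof. exact: (s2valP' (pPrimePowerField (isT : prime 2) (coin_len_gt0 n))). Qed.

Section FieldEncoding.
Variable n : nat.

Definition gf_of_nat (m : nat) : gf n := nth 0%R (enum (gf n)) m.
Definition nat_of_gf (y : gf n) : nat := index y (enum (gf n)).

Lemma nat_of_gfK : cancel nat_of_gf gf_of_nat.
Proof. by move=> y; rewrite /gf_of_nat /nat_of_gf nth_index ?mem_enum. Qed.

Lemma nat_of_gf_lt y : nat_of_gf y < 2 ^ coin_len n.
Proof. by rewrite -card_gf cardE /nat_of_gf index_mem mem_enum. Qed.

Lemma gf_of_nat_inj i j :
  i < 2 ^ coin_len n -> j < 2 ^ coin_len n -> gf_of_nat i = gf_of_nat j -> i = j.
Proof.
rewrite /gf_of_nat -card_gf cardE => i_lt j_lt /eqP.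
by rewrite nth_uniq ?enum_uniq // => /eqP.
Qed.

Lemma card_coin : #|{: (coin_len n).-tuple bool}| = #|gf n|.
Proof. by rewrite card_tuple card_bool card_gf. Qed.

Definition gf_of_coin (t : (coin_len n).-tuple bool) : gf n :=
  enum_val (cast_ord card_coin (enum_rank t)).

Lemma gf_of_coin_inj : injective gf_of_coin.
Proof. by move=> t1 t2 /enum_val_inj /(congr1 val) /= /val_inj; apply: enum_rank_inj. Qed.

Definition gf_of_bits (s : bitseq) : gf n :=
  gf_of_coin (insubd (nseq_tuple (coin_len n) false) s).

Lemma gf_of_bits_coin t : gf_of_bits (val t) = gf_of_coin t.
Proof. by rewrite /gf_of_bits valKd. Qed.

End FieldEncoding.

Lemma coin_space_gt n : 3 * n * n < 2 ^ coin_len n.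
Proof.
have n_lt : n < 2 ^ (trunc_log 2 n).+1 := trunc_log_ltn n (isT : 1 < 2).
have -> : 2 ^ coin_len n = 4 * 2 ^ (trunc_log 2 n).+1 * 2 ^ (trunc_log 2 n).+1.
  by rewrite -mulnA -expnD -[4]/(2 ^ 2) -expnD /coin_len -addnn; congr (2 ^ _); lia.
nia.
Qed.

Section Verifier.
Variables (c n : nat).

Definition cert_width := c.+2 * (trunc_log 2 n).+1 + 2.

(* A certificate packs five fields: the coin z of the root of a spanning tree,
   the root's identifier, the depth of the node in the tree, the identifier of
   its parent, and the product of [z - a_v] over the subtree of the node. *)
Definition cert_coin (s : bitseq) : gf n := gf_of_nat n (unpack cert_width 0 s).
Definition cert_root (s : bitseq) : nat := unpack cert_width 1 s.
Definition cert_depth (s : bitseq) : nat := unpack cert_width 2 s.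
Definition cert_parent (s : bitseq) : nat := unpack cert_width 3 s.
Definition cert_value (s : bitseq) : gf n := gf_of_nat n (unpack cert_width 4 s).

Definition iota_prod (z : gf n) : gf n := (\prod_(j <- iota 1 n) (z - gf_of_nat n j))%R.

Definition node_check (idu au : nat) (nids : seq nat) (coin s : bitseq) (ns : seq bitseq) :=
  let nbrs := zip nids ns in
  [&& all (fun t => (cert_coin t == cert_coin s) && (cert_root t == cert_root s)) ns,
      (cert_depth s == 0) ==> [&& idu == cert_root s, cert_coin s == gf_of_bits n coin
                                & cert_value s == iota_prod (cert_coin s)],
      (0 < cert_depth s) ==>
        has (fun p => (p.1 == cert_parent s) && (cert_depth p.2 == (cert_depth s).-1)) nbrs
    & (cert_value s != 0%R) && (cert_value s ==
        (cert_coin s - gf_of_nat n au) * \prod_(p <- nbrs | (cert_parent p.2 == idu)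
                         && (cert_depth p.2 == (cert_depth s).+1)) cert_value p.2)%R].

End Verifier.

Definition verifier (c : nat) : decision := fun n => node_check c n.

Lemma cert_width_coin_len c n : cert_width c n = c * (trunc_log 2 n).+1 + coin_len n.
Proof. by rewrite /cert_width /coin_len !mulSn -addnn; lia. Qed.

Lemma cert_width_bounds c n :
  [/\ 2 ^ coin_len n <= 2 ^ cert_width c n, n ^ c <= 2 ^ cert_width c n
    & n <= 2 ^ cert_width c n].
Proof.
have n_lt : n < 2 ^ (trunc_log 2 n).+1 := trunc_log_ltn n (isT : 1 < 2).
rewrite cert_width_coin_len; split; first by rewrite leq_exp2l // leq_addl.
  rewrite expnD (leq_trans _ (leq_pmulr _ _)) ?expn_gt0 // mulnC expnM.
  by case: c => [|c]; rewrite ?expn0 // leq_exp2r // ltnW.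
apply/ltnW/(leq_trans n_lt); rewrite leq_exp2l // /coin_len; lia.
Qed.

Section Soundness.
Variables (c n : nat) (e : rel 'I_n) (ports : 'I_n -> seq 'I_n) (id : 'I_n -> nat).
Variables (a : 'I_n -> nat) (x : coins n (coin_len n)) (pf : 'I_n -> bitseq).
Hypotheses (n_gt0 : 0 < n) (e_graph : valid_graph e) (e_ports : valid_ports e ports).
Hypotheses (id_inj : injective id) (accept : all_accept (verifier c) ports id a x pf).

Let z u := cert_coin c n (pf u).
Let root u := cert_root c n (pf u).
Let depth u := cert_depth c n (pf u).
Let parent_id u := cert_parent c n (pf u).
Let value u := cert_value c n (pf u).

Let mem_ports u v : (v \in ports u) = e u v. Proof. by case: (e_ports u). Qed.

Let check u : node_check c n (id u) (a u) (map id (ports u)) (val (x u)) (pf u)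
                (map pf (ports u)).
Proof. exact: (forallP accept u). Qed.

Let nbrsE u : zip (map id (ports u)) (map pf (ports u)) = [seq (id v, pf v) | v <- ports u].
Proof. by rewrite zip_map. Qed.

Lemma cert_coin_root_const u v : z v = z u /\ root v = root u.
Proof.
have [_ [_ conn]] := e_graph.
have agree w w' : e w w' -> z w' = z w /\ root w' = root w.
  move=> e_ww'; have /and4P [/allP agree_w _ _ _] := check w.
  by have /andP [/eqP z_w' /eqP root_w'] := agree_w _ (map_f _ (etrans (mem_ports _ _) e_ww')).
split; apply: (connect_invariant _ (conn u v)) => w w' /agree; tauto.
Qed.

Let u0 : 'I_n := Ordinal n_gt0.
Let m := [arg min_(u < u0) depth u].

Lemma depth_arg_min : depth m = 0.
Proof.
rewrite /m; case: arg_minnP => // u _ u_min; apply/eqP; apply: contraT; rewrite -lt0n.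
move=> d_gt0; have /and4P [_ _ /implyP /(_ d_gt0) /hasP [p]] := check u.
rewrite nbrsE => /mapP [v _ ->] /andP [_ /eqP d_v] _; have := u_min v isT.
by move: d_gt0; rewrite /depth d_v; lia.
Qed.

Lemma root_check_arg_min :
  [/\ id m = root m, z m = gf_of_coin (x m) & value m = iota_prod (z m)].
Proof.
have /and4P [_ /implyP + _ _] := check m; rewrite -/(depth m) depth_arg_min gf_of_bits_coin.
by move=> /(_ isT) /and3P [/eqP ? /eqP ? /eqP ?].
Qed.

Lemma depth0_arg_min u : depth u = 0 -> u = m.
Proof.
move=> d0; apply: id_inj; have [-> _ _] := root_check_arg_min.
have [_ <-] := cert_coin_root_const m u.
by have /and4P [_ /implyP + _ _] := check u; rewrite -/(depth u) d0 => /(_ isT) /and3P [/eqP].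
Qed.

Let parent u := odflt u [pick p | e u p && (id p == parent_id u) && (depth p == (depth u).-1)].

Lemma parentP u :
  u != m -> [/\ e u (parent u), id (parent u) = parent_id u & depth (parent u) = (depth u).-1].
Proof.
move=> u_m; have d_gt0 : 0 < depth u by rewrite lt0n; apply: contra u_m => /eqP /depth0_arg_min ->.
rewrite /parent; case: pickP => [p /andP [/andP [e_up /eqP ->] /eqP ->] // | no_parent].
have /and4P [_ _ /implyP /(_ d_gt0) + _] := check u.
rewrite nbrsE => /hasP [_ /mapP [p p_u ->] /= /andP [/eqP id_p /eqP d_p]].
by have := no_parent p; rewrite -mem_ports p_u /= id_p /depth d_p !eqxx.
Qed.

Lemma value_rec u :
  value u = ((z m - gf_of_nat n (a u)) * \prod_(v | (v != m) && (parent v == u)) value v)%R.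
Proof.
have [e_sym _] := e_graph.
have /and4P [_ _ _ /andP [_ /eqP value_u]] := check u; rewrite /value value_u.
rewrite -/(z u) (proj1 (cert_coin_root_const m u)) nbrsE big_map.
congr (_ * _)%R; apply: big_uniq_cond; first by case: (e_ports u).
move=> v; rewrite mem_ports /=; apply/idP/idP.
  case/andP=> e_uv /andP [/eqP id_u /eqP d_v].
  have v_m : v != m by apply/eqP => v_m; move: d_v; rewrite v_m -/(depth m) depth_arg_min.
  by have [_ id_p _] := parentP v_m; rewrite v_m; apply/eqP/id_inj; rewrite id_p -id_u.
case/andP=> v_m /eqP parent_v; have [] := parentP v_m; rewrite parent_v => e_vu id_u d_u.
have d_gt0 : 0 < depth v by rewrite lt0n; apply: contra v_m => /eqP /depth0_arg_min ->.
by rewrite e_sym e_vu -/(parent_id v) -id_u -/(depth v) -/(depth u) d_u prednK // !eqxx.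
Qed.

Lemma all_accept_root_coin :
  exists m, iota_prod (gf_of_coin (x m)) = (\prod_u (gf_of_coin (x m) - gf_of_nat n (a u)))%R.
Proof.
have [_ z_m value_m] := root_check_arg_min.
exists m; rewrite -z_m -value_m.
apply: (prod_tree (parent := parent)) => [u|]; last exact: value_rec.
by have /and4P [_ _ _ /andP [? _]] := check u.
Qed.

End Soundness.

Lemma card_iota_prod_eq n (a : 'I_n -> nat) :
    (forall u, 1 <= a u <= n) -> ~ injective a ->
  #|[set y : gf n | iota_prod y == (\prod_u (y - gf_of_nat n (a u)))%R]| <= n.
Proof.
move=> a_range a_ninj; have [k iota_k a_k] := missing_value a_ninj.
have small j : j \in iota 1 n -> j < 2 ^ coin_len n.
  rewrite mem_iota => /andP [_ j_lt]; have := coin_space_gt n; nia.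
have gf_k : gf_of_nat n k \notin map (gf_of_nat n) (codom a).
  apply/mapP => -[_ /codomP [u ->] /gf_of_nat_inj eq_k]; case/negP: a_k; apply/codomP.
  by exists u; apply: eq_k; apply: small => //; apply: (codom_sub_iota a_range); apply: codom_f.
have size_eq : size (map (gf_of_nat n) (codom a)) = size (map (gf_of_nat n) (iota 1 n)).
  by rewrite size_map size_codom card_ord size_map size_iota.
have := card_prod_subr_eq size_eq (map_f (gf_of_nat n) iota_k) gf_k.
rewrite size_eq size_map size_iota; apply: leq_trans; apply: subset_leq_card.
by apply/subsetP => y; rewrite !inE /iota_prod !big_map eq_sym.
Qed.

Section Completeness.
Variables (c n : nat) (e : rel 'I_n) (ports : 'I_n -> seq 'I_n) (id : 'I_n -> nat).
Variables (a : 'I_n -> nat) (r : 'I_n) (depth : 'I_n -> nat).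
Hypotheses (e_graph : valid_graph e) (e_ports : valid_ports e ports) (e_ids : valid_ids c id).
Hypotheses (a_range : permutation_inputs a) (a_inj : injective a).
Hypotheses (depth_lt : forall u, depth u < n) (depth0 : forall u, depth u = 0 <-> u = r).
Hypothesis depth_pred : forall u, 0 < depth u -> exists2 p, e u p & depth p = (depth u).-1.

Definition tree_parent u := odflt u [pick p | e u p && (depth p == (depth u).-1)].

Lemma tree_parentP u : 0 < depth u -> e u (tree_parent u) /\ depth (tree_parent u) = (depth u).-1.
Proof.
move=> d_gt0; rewrite /tree_parent; case: pickP => [p /andP [? /eqP ?] // | no_parent].
by have [p e_up d_p] := depth_pred d_gt0; have := no_parent p; rewrite e_up d_p eqxx.
Qed.

Definition tree_children u :=
  [seq v <- ports u | (id (tree_parent v) == id u) && (depth v == (depth u).+1)].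

Variable z : gf n.

Definition subtree_value u : gf n :=
  tree_prod (fun v => z - gf_of_nat n (a v))%R tree_children (n - depth u) u.

Definition honest_cert u :=
  pack (cert_width c n)
    [:: nat_of_gf z; id r; depth u; id (tree_parent u); nat_of_gf (subtree_value u)].

Lemma size_honest_cert u : size (honest_cert u) = 5 * cert_width c n.
Proof. by rewrite size_pack. Qed.

Lemma honest_cert_fields u :
  [/\ cert_coin c n (honest_cert u) = z, cert_root c n (honest_cert u) = id r,
      cert_depth c n (honest_cert u) = depth u,
      cert_parent c n (honest_cert u) = id (tree_parent u)
    & cert_value c n (honest_cert u) = subtree_value u].
Proof.
have [coin_le id_le n_le] := cert_width_bounds c n; have [_ id_lt] := e_ids.
have gf_lt (y : gf n) : nat_of_gf y < 2 ^ cert_width c n by apply: leq_trans (nat_of_gf_lt y) _.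
have id_lt' v : id v < 2 ^ cert_width c n by apply: (leq_trans (id_lt v)).
have depth_lt' : depth u < 2 ^ cert_width c n by apply: (leq_trans (depth_lt u)).
by rewrite /cert_coin /cert_root /cert_depth /cert_parent /cert_value !unpack_pack //= ?nat_of_gfK.
Qed.

Lemma tree_childrenE u v :
  (v \in ports u) && ((id (tree_parent v) == id u) && (depth v == (depth u).+1))
  = (v != r) && (tree_parent v == u).
Proof.
have [e_sym _] := e_graph; have [id_inj _] := e_ids.
have [_ mem_ports] := e_ports u; rewrite mem_ports; apply/idP/idP.
  case/and3P=> _ /eqP /id_inj -> /eqP d_v; rewrite eqxx andbT.
  by apply/eqP => v_r; move: d_v; rewrite v_r (proj2 (depth0 r)).
case/andP=> v_r /eqP parent_v; have d_gt0 : 0 < depth v.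
  by rewrite lt0n; apply: contra v_r => /eqP /depth0 ->.
have [] := tree_parentP d_gt0; rewrite parent_v => e_vu ->.
by rewrite e_sym e_vu prednK // !eqxx.
Qed.

Lemma subtree_value_rec u :
  subtree_value u =
    ((z - gf_of_nat n (a u)) * \prod_(v | (v != r) && (tree_parent v == u)) subtree_value v)%R.
Proof.
rewrite /subtree_value -(subnSK (depth_lt u)) /=; congr (_ * _)%R.
rewrite big_filter -(big_uniq_cond _ _ (proj1 (e_ports u)) (tree_childrenE u)).
by apply: eq_bigr => v /andP [_ /eqP ->].
Qed.

Hypothesis z_ok : z \notin map (gf_of_nat n) (iota 1 n).

Lemma subtree_value_neq0 u : subtree_value u != 0%R.
Proof.
apply: tree_prod_neq0 => v; rewrite subr_eq0; apply: contraNneq z_ok => ->.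
exact/map_f/(codom_sub_iota a_range)/codom_f.
Qed.

Lemma subtree_value_root : subtree_value r = iota_prod z.
Proof.
rewrite (prod_tree (parent := tree_parent) subtree_value_neq0 subtree_value_rec).
exact: (prod_codom_iota (fun j => z - gf_of_nat n j)%R a_range a_inj).
Qed.

Lemma honest_cert_accepted (x : coins n (coin_len n)) :
  gf_of_coin (x r) = z -> all_accept (verifier c) ports id a x honest_cert.
Proof.
move=> coin_r; apply/forallP => u; rewrite /verifier /node_check zip_map.
have [coin_u root_u depth_u parent_u value_u] := honest_cert_fields u.
apply/and4P; split.
- apply/allP => _ /mapP [v _ ->]; have [-> -> _ _ _] := honest_cert_fields v.
  by rewrite coin_u root_u !eqxx.
- apply/implyP; rewrite depth_u => /eqP /depth0 u_r; move: coin_u value_u root_u.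
  by rewrite u_r gf_of_bits_coin coin_r subtree_value_root => -> -> ->; rewrite !eqxx.
- apply/implyP; rewrite depth_u => d_gt0; apply/hasP; have [e_up d_p] := tree_parentP d_gt0.
  exists (id (tree_parent u), honest_cert (tree_parent u)).
    by apply: map_f; rewrite (proj2 (e_ports u)).
  by have [_ _ -> _ _] := honest_cert_fields (tree_parent u); rewrite /= parent_u d_p !eqxx.
rewrite value_u subtree_value_neq0 coin_u subtree_value_rec big_map /=.
rewrite -(big_uniq_cond _ _ (proj1 (e_ports u)) (tree_childrenE u)).
apply/eqP; congr (_ * _)%R.
apply: eq_big => [v | v _]; have [_ _ d_v p_v val_v] := honest_cert_fields v.
  by rewrite d_v p_v depth_u.
by rewrite val_v.
Qed.

End Completeness.

Lemma card_coin_event n (w : 'I_n) (S : {pred gf n}) :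
  #|[pred x : coins n (coin_len n) | gf_of_coin (x w) \in S]| = #|S| * (2 ^ coin_len n) ^ n.-1.
Proof.
rewrite (card_ffun_coord w [pred t | gf_of_coin t \in S]) card_ord card_coin card_gf.
by rewrite card_preim_bij //; [exact: gf_of_coin_inj | exact: card_coin].
Qed.

Lemma card_coins n : 0 < n -> #|coins n (coin_len n)| = 2 ^ coin_len n * (2 ^ coin_len n) ^ n.-1.
Proof. by case: n => // n _; rewrite card_ffun card_coin card_gf card_ord expnS. Qed.

Lemma dAM_complete c n (e : rel 'I_n) ports (id a : 'I_n -> nat) :
    0 < n -> valid_graph e -> valid_ports e ports -> valid_ids c id ->
    permutation_inputs a -> injective a ->
  exists P : coins n (coin_len n) -> 'I_n -> bitseq,
    (forall x u, size (P x u) = 5 * cert_width c n) /\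
    2 * #|coins n (coin_len n)| < 3 * acc_count (verifier c) ports id a P.
Proof.
move=> n_gt0 e_graph e_ports e_ids a_range a_inj; pose r : 'I_n := Ordinal n_gt0.
have [depth [depth_lt depth0 depth_pred]] := exists_depth (fun u => proj2 (proj2 e_graph) u r).
rewrite card_ord in depth_lt.
exists (fun x => honest_cert c e ports id a r depth (gf_of_coin (x r))).
split=> [x u|]; first exact: size_honest_cert.
pose A := map (gf_of_nat n) (iota 1 n).
have good : #|[predC A]| * (2 ^ coin_len n) ^ n.-1 <= acc_count (verifier c) ports id a
              (fun x => honest_cert c e ports id a r depth (gf_of_coin (x r))).
  rewrite -(card_coin_event r); apply: subset_leq_card; apply/subsetP => x; rewrite !inE.
  by move=> z_ok; apply: (honest_cert_accepted e_graph e_ports e_ids a_range a_inj).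
have card_A : #|A| <= n by rewrite (leq_trans (card_size A)) // size_map size_iota.
have q_gt := coin_space_gt n; have := cardC (mem A); rewrite card_gf (card_coins n_gt0) => card_AC.
apply: (leq_trans _ (leq_mul (leqnn 3) good)); rewrite mulnA [3 * _]mulnA ltn_pmul2r ?expn_gt0 //.
move: card_AC card_A q_gt; move: #|A| #|[predC A]| => k m; nia.
Qed.

Lemma dAM_sound c n (e : rel 'I_n) ports (id a : 'I_n -> nat) :
    0 < n -> valid_graph e -> valid_ports e ports -> injective id ->
    permutation_inputs a -> ~ injective a ->
  forall P : coins n (coin_len n) -> 'I_n -> bitseq,
    3 * acc_count (verifier c) ports id a P < #|coins n (coin_len n)|.
Proof.
move=> n_gt0 e_graph e_ports id_inj a_range a_ninj P.
pose B := [set y : gf n | iota_prod y == (\prod_u (y - gf_of_nat n (a u)))%R].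
have bad : acc_count (verifier c) ports id a P
           <= #|[pred x : coins n (coin_len n) | [exists w, gf_of_coin (x w) \in B]]|.
  apply: subset_leq_card; apply/subsetP => x; rewrite !inE => accept.
  have [m root_m] := all_accept_root_coin n_gt0 e_graph e_ports id_inj accept.
  by apply/existsP; exists m; rewrite inE root_m.
have := card_exists_le (fun w => [pred x : coins n (coin_len n) | gf_of_coin (x w) \in B]).
rewrite (eq_bigr _ (fun w _ => card_coin_event w B)) sum_nat_const card_ord => union.
have card_B := card_iota_prod_eq a_range a_ninj; have q_gt := coin_space_gt n.
rewrite (card_coins n_gt0); apply: (leq_ltn_trans (leq_mul (leqnn 3) (leq_trans bad union))).
rewrite !mulnA ltn_pmul2r ?expn_gt0 //.
by move: card_B q_gt; rewrite -/B; move: #|B| => b; nia.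
Qed.

Theorem theorem1p3 : in_dAM_log permutation_lang permutation_inputs.
Proof.
move=> c; exists (5 * c.+4), coin_len, (verifier c).
split=> [n | n e ports id a n_gt0 e_graph e_ports e_ids a_range].
  by rewrite /coin_len -addnn; move: (trunc_log 2 n) => L; nia.
split=> [a_inj | a_ninj P _].
  have [P [size_P acc_P]] := dAM_complete n_gt0 e_graph e_ports e_ids a_range a_inj.
  by exists P; split=> // x u; rewrite size_P /cert_width; move: (trunc_log 2 n) => L; nia.
exact: (dAM_sound c n_gt0 e_graph e_ports (proj1 e_ids) a_range a_ninj).
Qed.
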